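(* Let $(x_n,y_n)_{n\in\mathbb Z}$ and $(x'_n,y'_n)_{n\in\mathbb Z}$ be two elliptic sequences in general position on the same biquadratic polynomial $F$, let $A=y'_{-1}$, and let $f$ be a function defined on $\{x_n:n\ge0\}$ satisfying $(\mathcal Df)(y_n)=\dfrac{Y_2(y_n)}{y_n-A}$ for all $n\ge0$. Assume $C_{m,0,0}\ne0$ for all $m\ge1$. Put $c_0=f(x_0)$ and $c_m=\dfrac{y_{m-1}-y'_{m-1}}{C_{m,0,0}}$ for $m\ge1$. Then for every $N\ge0$ the partial sum $$S_N(x)=\sum_{m=0}^Nc_m\frac{(x-x_0)\cdots(x-x_{m-1})}{(x-x'_0)\cdots(x-x'_{m-1})}$$ satisfies $S_N(x_n)=f(x_n)$ for $n=0,1,\dots,N$; i.e. $f(x)=\sum_{m\ge0}c_m\frac{(x-x_0)\cdots(x-x_{m-1})}{(x-x'_0)\cdots(x-x'_{m-1})}$ as an interpolatory expansion.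
   Context: $F(x,y)=\sum_{i,j=0}^2c_{i,j}x^iy^j=Y_0(y)+xY_1(y)+x^2Y_2(y)=X_0(x)+yX_1(x)+y^2X_2(x)$. An elliptic sequence on $F$ is $(x_n,y_n)_{n\in\mathbb Z}$ such that for every $n$, $x_n,x_{n+1}$ are the two roots of $F(\cdot,y_n)$ and $y_{n-1},y_n$ the two roots of $F(x_n,\cdot)$; general position means all $x_n,x'_n$ distinct, all $y_n,y'_n$ distinct, $X_2,Y_2$ nonvanishing there. $(\mathcal Df)(y_n)=\frac{f(x_{n+1})-f(x_n)}{x_{n+1}-x_n}$; for rational $f$, $(\mathcal Df)(y)=\frac{f(x^+)-f(x^-)}{x^+-x^-}$ with $x^\pm$ the roots of $F(x,y)=0$. $C_{m,0,0}$ is the constant such that $\mathcal D\Big[\frac{(x-x_0)\cdots(x-x_{m-1})}{(x-x'_0)\cdots(x-x'_{m-1})}\Big](y)=C_{m,0,0}Y_2(y)\frac{(y-y_0)\cdots(y-y_{m-2})}{(y-y'_{-1})(y-y'_0)\cdots(y-y'_{m-1})}$ (such a constant exists). Empty products equal $1$. *)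

From HB Require Import structures.
From mathcomp Require Import all_boot all_order all_algebra.
Set Implicit Arguments. Unset Strict Implicit. Unset Printing Implicit Defensive.
Import Order.TTheory GRing.Theory Num.Theory.
Local Open Scope ring_scope.

Section Biquad.
Variable K : numClosedFieldType.
Variable c : 'I_3 -> 'I_3 -> K.

Definition Fb (x y : K) : K := \sum_(i < 3) \sum_(j < 3) c i j * x ^+ i * y ^+ j.
Definition Ycoef (i : 'I_3) (y : K) : K := \sum_(j < 3) c i j * y ^+ j.
Definition Xcoef (j : 'I_3) (x : K) : K := \sum_(i < 3) c i j * x ^+ i.
Definition Y2 := Ycoef (@inord 2 2).
Definition X2 := Xcoef (@inord 2 2).

(* "a and b are the two roots of F(., y)": F(., y) has degree 2 and
   F(t, y) = Y_2(y) (t - a) (t - b) identically in t. *)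
Definition two_roots_x (y a b : K) : Prop :=
  Y2 y != 0 /\ forall t, Fb t y = Y2 y * (t - a) * (t - b).
Definition two_roots_y (x a b : K) : Prop :=
  X2 x != 0 /\ forall s, Fb x s = X2 x * (s - a) * (s - b).

Definition elliptic_seq (x y : int -> K) : Prop :=
  forall n : int, two_roots_x (y n) (x n) (x (n + 1)) /\
                  two_roots_y (x n) (y (n - 1)) (y n).

Definition general_position (x y x' y' : int -> K) : Prop :=
  [/\ injective x, injective x', (forall n m, x n != x' m)
      & injective y] /\ [/\ injective y', (forall n m, y n != y' m) &
      forall n, [/\ X2 (x n) != 0, X2 (x' n) != 0,
                    Y2 (y n) != 0 & Y2 (y' n) != 0]].

Definition ratbasis (x x' : int -> K) (m : nat) (t : K) : K :=
  (\prod_(k < m) (t - x (Posz k))) / (\prod_(k < m) (t - x' (Posz k))).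

(* C is the constant C_{m,0,0}: the identity
   D[ratbasis m](y) = C Y_2(y) (y-y_0)...(y-y_{m-2}) /
                      ((y-y'_{-1})(y-y'_0)...(y-y'_{m-1}))
   holds (as rational functions of y; equivalently, since K is
   algebraically closed, at every point y where all terms are defined,
   with x^+ != x^- the two roots of F(., y)). *)
Definition is_Cm00 (x y x' y' : int -> K) (m : nat) (C : K) : Prop :=
  forall (yy a b : K),
    two_roots_x yy a b -> a != b ->
    (forall k : nat, (k < m)%N -> a != x' (Posz k) /\ b != x' (Posz k)) ->
    (forall k : nat, (k < m.+1)%N -> yy != y' (Posz k - 1)) ->
    (ratbasis x x' m a - ratbasis x x' m b) / (a - b) =
      C * Y2 yy * (\prod_(k < m.-1) (yy - y (Posz k)))
        / (\prod_(k < m.+1) (yy - y' (Posz k - 1))).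

End Biquad.

(** The basis function of index [m] vanishes
    at [x_0, ..., x_(m-1)], so [S_N(x_n) = S_n(x_n)] for [n <= N], and it
    suffices to show [S_n(x_n) = f(x_n)] by induction on [n].  The definition
    of [C_(m,0,0)] computes the divided difference of [S_(n+1)] across the
    roots [x_n, x_(n+1)] of [F(., y_n)] as [Y_2(y_n)] times a sum that
    telescopes to [1 / (y_n - y'_(-1))], the last term dying because its
    numerator contains the factor [y_n - y_n].  Hence [S_(n+1)] and [f] have
    the same divided difference across [x_n, x_(n+1)] and agree at [x_n], so
    they agree at [x_(n+1)]. *)

From HB Require Import structures.
From mathcomp Require Import all_boot all_order all_algebra.
From mathcomp Require Import ring.
Set Implicit Arguments. Unset Strict Implicit. Unset Printing Implicit Defensive.
Import Order.TTheory GRing.Theory Num.Theory.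
Local Open Scope ring_scope.

Definition divdiff (K : fieldType) (g : K -> K) (a b : K) : K :=
  (g a - g b) / (a - b).

Lemma eq_from_divdiff (K : fieldType) (g h : K -> K) (a b : K) :
  a != b -> g b = h b -> divdiff g a b = divdiff h a b -> g a = h a.
Proof.
rewrite -subr_eq0 /divdiff => ab_neq0 gb_hb.
by rewrite gb_hb => /(congr1 ( *%R^~ (a - b))); rewrite !divfK // => /subIr.
Qed.

Lemma divdiff_sum (K : fieldType) (I : Type) (r : seq I) (F : I -> K -> K) a b :
  divdiff (fun t => \sum_(i <- r) F i t) a b = \sum_(i <- r) divdiff (F i) a b.
Proof. by rewrite /divdiff -sumrB mulr_suml. Qed.

Lemma divdiffZ (K : fieldType) (k : K) (g : K -> K) a b :
  divdiff (fun t => k * g t) a b = k * divdiff g a b.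
Proof. by rewrite /divdiff -mulrBr mulrA. Qed.

(* The [j]-th term is [u j - u j.+1] for
   [u j = prod_(k < j) (Y - v k) / prod_(k <= j) (Y - w k)], and [u n.+1 = 0]
   because [Y = v n]. *)
Lemma telescope_prod_ratio (K : fieldType) (v w : nat -> K) (Y : K) (n : nat) :
  (forall k, Y - w k != 0) -> Y = v n ->
  \sum_(j < n.+1) (v j - w j.+1) * (\prod_(k < j) (Y - v k))
                    / (\prod_(k < j.+2) (Y - w k)) = (Y - w 0%N)^-1.
Proof.
move=> w_neq Yv.
pose u j := (\prod_(k < j) (Y - v k)) / \prod_(k < j.+1) (Y - w k).
have uS j : (v j - w j.+1) * (\prod_(k < j) (Y - v k))
              / (\prod_(k < j.+2) (Y - w k)) = - (u j.+1 - u j).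
  have Q_neq0 : \prod_(k < j.+1) (Y - w k) != 0 by apply/prodf_neq0.
  rewrite /u [\prod_(k < j.+1) (Y - v k)]big_ord_recr.
  rewrite [\prod_(k < j.+2) _]big_ord_recr /=.
  by field; rewrite Q_neq0 w_neq.
rewrite (eq_bigr (fun j : 'I_n.+1 => - (u j.+1 - u j))); last by move=> j _; exact: uS.
rewrite sumrN -(big_mkord xpredT (fun j => u j.+1 - u j)) telescope_sumr //.
by rewrite /u big_ord_recr /= -Yv subrr mulr0 mul0r big_ord0 big_ord1 div1r sub0r opprK.
Qed.

Section Interpolation.

Variables (K : numClosedFieldType) (c : 'I_3 -> 'I_3 -> K).
Variables (x y x' y' : int -> K).

Lemma ratbasis0 (t : K) : ratbasis x x' 0 t = 1.
Proof. by rewrite /ratbasis !big_ord0 divr1. Qed.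

Lemma ratbasis_node_eq0 (m n : nat) :
  (n < m)%N -> ratbasis x x' m (x (Posz n)) = 0.
Proof. by move=> lt_nm; rewrite /ratbasis (bigD1 (Ordinal lt_nm)) //= subrr !mul0r. Qed.

Lemma sum_ratbasis_node (a : nat -> K) (N n : nat) : (n <= N)%N ->
  \sum_(m < N.+1) a m * ratbasis x x' m (x (Posz n))
    = \sum_(m < n.+1) a m * ratbasis x x' m (x (Posz n)).
Proof.
move=> le_nN; rewrite [RHS](big_ord_widen N.+1 (fun m => a m * ratbasis x x' m _)) //.
rewrite [LHS](bigID (fun m : 'I_N.+1 => (m < n.+1)%N)) /= addrC big1 ?add0r //.
by move=> m; rewrite -leqNgt => lt_nm; rewrite ratbasis_node_eq0 ?mulr0.
Qed.

Variable C : nat -> K.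

Definition interp_coef (a0 : K) (m : nat) : K :=
  if m is m1.+1 then (y (Posz m1) - y' (Posz m1)) / C m else a0.

Hypothesis Cm00 : forall m : nat, (1 <= m)%N -> is_Cm00 c x y x' y' m (C m).
Hypothesis C_neq0 : forall m : nat, (1 <= m)%N -> C m != 0.
Hypothesis y_y'_neq : forall n m, y n != y' m.

Lemma divdiff_interp_sum (a0 : K) (n : nat) (Y a b : K) :
  two_roots_x c Y a b -> a != b ->
  (forall k : nat, a != x' (Posz k) /\ b != x' (Posz k)) -> Y = y (Posz n) ->
  divdiff (fun t => \sum_(m < n.+2) interp_coef a0 m * ratbasis x x' m t) a b
    = Y2 c Y / (Y - y' (-1)).
Proof.
move=> roots ab_neq a_b_x' Y_def.
have Y_neq k : Y - y' k != 0 by rewrite Y_def subr_eq0 y_y'_neq.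
rewrite divdiff_sum big_ord_recl divdiffZ {1}/divdiff !ratbasis0 subrr mul0r mulr0 add0r.
rewrite -(telescope_prod_ratio (v := fun k => y (Posz k))
  (w := fun k => y' (Posz k - 1)) (fun k => Y_neq _) Y_def).
rewrite mulr_sumr; apply: eq_bigr => i _; rewrite divdiffZ lift0 /divdiff.
rewrite (Cm00 (ltn0Sn i) roots ab_neq); first last.
- by move=> k _; rewrite -subr_eq0.
- by move=> k _; exact: a_b_x'.
have C_i_neq0 := C_neq0 (ltn0Sn i).
have -> : Posz i.+1 - 1 = Posz i by rewrite -addn1 PoszD addrK.
rewrite [\prod_(k < i.+2) _]big_ord_recr /=.
by field; rewrite C_i_neq0 Y_neq andbT; apply/prodf_neq0 => k _; apply: Y_neq.
Qed.

End Interpolation.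

Lemma two_roots_xC (K : numClosedFieldType) (c : 'I_3 -> 'I_3 -> K) (Y a b : K) :
  two_roots_x c Y a b -> two_roots_x c Y b a.
Proof. by case=> Y2_neq0 F_eq; split=> // t; rewrite F_eq -!mulrA [_ * (t - b)]mulrC. Qed.

Theorem mainTheorem9 (K : numClosedFieldType) (c : 'I_3 -> 'I_3 -> K)
    (x y x' y' : int -> K) (f : K -> K) (C : nat -> K) :
  elliptic_seq c x y -> elliptic_seq c x' y' ->
  general_position c x y x' y' ->
  (forall n : nat,
     (f (x (Posz n + 1)) - f (x (Posz n))) / (x (Posz n + 1) - x (Posz n))
       = Y2 c (y (Posz n)) / (y (Posz n) - y' (-1))) ->
  (forall m : nat, (1 <= m)%N -> is_Cm00 c x y x' y' m (C m)) ->
  (forall m : nat, (1 <= m)%N -> C m != 0) ->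
  let cm := fun m : nat =>
    if m is m1.+1 then (y (Posz m1) - y' (Posz m1)) / C m else f (x 0) in
  forall N n : nat, (n <= N)%N ->
    \sum_(m < N.+1) cm m * ratbasis x x' m (x (Posz n)) = f (x (Posz n)).
Proof.
move=> ell _ [[x_inj _ x_x'_neq _] [_ y_y'_neq _]] f_divdiff Cm00 C_neq0 cm N n le_nN.
pose S n t := \sum_(m < n.+1) interp_coef y y' C (f (x 0)) m * ratbasis x x' m t.
rewrite (sum_ratbasis_node _ _ _ le_nN); change (S n (x (Posz n)) = f (x (Posz n))).
elim: n {N le_nN} => [|n IHn]; first by rewrite /S big_ord1 ratbasis0 mulr1.
have xS : x (Posz n + 1) = x (Posz n.+1) by rewrite -addn1 PoszD.
have x_neq : x (Posz n.+1) != x (Posz n) by apply/eqP => /x_inj [] /esym /n_Sn.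
apply: (eq_from_divdiff x_neq).
  by rewrite /S sum_ratbasis_node //; exact: IHn.
rewrite [RHS]/divdiff -xS f_divdiff xS.
apply: (divdiff_interp_sum Cm00 C_neq0 y_y'_neq _ _ x_neq) => [||//].
- by have [roots _] := ell (Posz n); rewrite xS in roots; exact: two_roots_xC.
- by move=> k; split; exact: x_x'_neq.
Qed.
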